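(* Assume that for every $x\in V$ the functions $s\mapsto H(x,s)$ and $s\mapsto f_l(x,s)$ ($l=1,\dots,m$) are nondecreasing on $[0,\infty)$, and that $H$ is $1$-Lipschitz in $s$, i.e. $|H(x,s)-H(x,t)|\le |s-t|$ for all $x\in V$ and all $s,t\in[0,\infty)$. Then there exists a unique vector $(u^1,u^2,\dots,u^m)$ of functions $u^l:V\to\mathbb{R}$ satisfying the discrete system (S).
   Context: Let $G=(V,E)$ be a finite, connected, undirected graph with at least two vertices. For $x,y\in V$, $d(x,y)$ denotes the graph (shortest-path) distance, and $\deg(x)=|\{y\in V:(x,y)\in E\}|$. The boundary of $G$ is $$\partial G=\Big\{x\in V:\ \exists\, y\in V \text{ with } \tfrac{1}{\deg(x)}\textstyle\sum_{(x,z)\in E} d(z,y)<d(x,y)\Big\},$$ and the interior is $G^o=V\setminus\partial G$. For $r:V\to\mathbb{R}$, the mean value at $x$ is $\overline{r}(x)=\frac{1}{\deg(x)}\sum_{(x,y)\in E} r(y)$. Fix an integer $m\ge1$. Let $H:V\times[0,\infty)\to\mathbb{R}$ and $f_l:V\times[0,\infty)\to\mathbb{R}$ ($l=1,\dots,m$) be continuous in the second variable with $H(x,0)=0$ and $f_l(x,0)=0$ for all $x\in V$; they are extended to negative arguments by $H(x,s)=-H(x,-s)$ and $f_l(x,s)=-f_l(x,-s)$ for $s<0$. Let $\phi^l:\partial G\to[0,\infty)$ ($l=1,\dots,m$) be boundary data satisfying $\phi^i(x)\phi^j(x)=0$ for all $x\in\partial G$ and $i\neq j$. The discrete system (S) for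 $(u^1,\dots,u^m)$, $u^l:V\to\mathbb{R}$, is: for every $l=1,\dots,m$, $$u^l(x)=\max\Big(H\Big(x,\ \overline{u}^l(x)-\sum_{p\neq l}\overline{u}^p(x)\Big)-f_l\big(x,u^l(x)\big),\ 0\Big)\quad (x\in G^o),\qquad u^l(x)=\phi^l(x)\quad (x\in\partial G).$$ *)

From HB Require Import structures.
From mathcomp Require Import all_boot all_order all_algebra.
From mathcomp Require Import all_classical all_reals all_analysis.
Set Implicit Arguments. Unset Strict Implicit. Unset Printing Implicit Defensive.
Import Order.TTheory GRing.Theory Num.Theory.
Local Open Scope ring_scope.

Section GraphDefs.
Variables (V : finType) (e : rel V).

Definition ball (k : nat) (x : V) : {set V} :=
  iter k (fun S : {set V} => S :|: [set z | [exists w in S, e w z]]) [set x].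

(* shortest-path distance: the least k with y in ball k x
   (for a connected graph this is < #|V|) *)
Definition gdist (x y : V) : nat :=
  find (fun k => y \in ball k x) (iota 0 #|V|).

Definition gdeg (x : V) : nat := #|[set y | e x y]|.

Definition mean_val {R : realType} (r : V -> R) (x : V) : R :=
  (gdeg x)%:R^-1 * \sum_(y in V | e x y) r y.

Definition in_boundary {R : realType} (x : V) : Prop :=
  exists y : V, mean_val (fun z => ((gdist z y)%:R : R)) x < (gdist x y)%:R.

End GraphDefs.

From Pilot Require Import Defs.
From HB Require Import structures.
From mathcomp Require Import all_boot all_order all_algebra.
From mathcomp Require Import all_classical all_reals all_analysis.
From mathcomp Require Import ring lra.
Import Order.TTheory GRing.Theory Num.Theory.
Import numFieldNormedType.Exports.
Local Open Scope classical_set_scope.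
Local Open Scope ring_scope.

(* At an interior vertex x, the l-th equation of (S) is a scalar equation
   t = max (H x a - f_l x t) 0 in t >= 0, where a is the mean of u^l minus the means of the
   other components.  Monotonicity and the intermediate value theorem give a unique solution,
   which depends 1-Lipschitz on a and satisfies t <= a when t > 0.  The values a of distinct
   components have pairwise nonpositive sums, so at most one component is positive at x, and
   the change of every excess u^l - sum_(p <> l) u^p at x is bounded by the change of a single
   mean.  Weighting each vertex by 1 - |V|^-k, where k is its distance to the boundary, makes
   the neighbourhood mean of the weight uniformly smaller than the weight at interior vertices,
   so the update is a contraction of ratio theta < 1 for the weighted sup distance between
   excess fields: its iterates converge geometrically, and solutions are unique. *)

Section ScalarEquation.
Variables (R : realType) (h g : R -> R).
Hypotheses (h0 : h 0 = 0) (h_odd : forall s : R, s < 0 -> h s = - h (- s))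
  (h_mono : forall s t : R, 0 <= s -> s <= t -> h s <= h t)
  (h_lip : forall s t : R, 0 <= s -> 0 <= t -> `|h s - h t| <= `|s - t|)
  (g0 : g 0 = 0) (g_mono : forall s t : R, 0 <= s -> s <= t -> g s <= g t).

Definition scalar_sol (a t : R) := 0 <= t /\ t = Num.max (h a - g t) 0.

Lemma scalar_sol_exists :
  {within [set s : R | 0 <= s], continuous g} -> forall a, exists t, scalar_sol a t.
Proof.
move=> g_cont a; have [ha|ha] := leP (h a) 0.
  by exists 0; split; rewrite ?lexx // g0 subr0 max_r.
pose k t := t + g t.
have kc : {within `[0, h a], continuous k}.
  apply: (@continuous_subspaceW _ _ _ [set s : R | 0 <= s]).
    by move=> s /=; rewrite in_itv /= => /andP[].
  apply: (@within_continuousD _ _ _ _ id g) => //.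
  by apply: continuous_subspaceT => x; exact: cvg_id.
have g_ha : 0 <= g (h a) by rewrite -g0 g_mono ?lexx // ltW.
have ha_between : Num.min (k 0) (k (h a)) <= h a <= Num.max (k 0) (k (h a)).
  by rewrite /k g0 addr0 ge_min le_max (ltW ha) lerDl g_ha orbT.
have [c] := IVT (ltW ha) kc ha_between.
rewrite in_itv /= /k => /andP[c0 _] kc_ha.
by exists c; split; rewrite // max_l; lra.
Qed.

Lemma h_le a : 0 <= a -> h a <= a.
Proof.
move=> a0; have := h_lip _ _ a0 (lexx 0); rewrite h0 !subr0 [`|a|]ger0_norm //.
exact: le_trans (ler_norm _).
Qed.

Lemma h_le0 a : a <= 0 -> h a <= 0.
Proof.
rewrite le_eqVlt => /predU1P[->|a0]; first by rewrite h0.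
by rewrite h_odd // oppr_le0 -h0 h_mono ?lexx // oppr_ge0 ltW.
Qed.

Lemma h_subr_le a b : 0 <= a -> h a - h b <= `|a - b|.
Proof.
move=> a0; have [b0|b0] := leP 0 b; first exact: le_trans (ler_norm _) (h_lip _ _ a0 b0).
rewrite (h_odd _ b0) opprK ger0_norm; last by rewrite subr_ge0 (le_trans (ltW b0)).
by have := h_le _ a0; have := h_le (-b); rewrite oppr_ge0 ltW //; lra.
Qed.

Lemma scalar_sol_gt0 {a t} : scalar_sol a t -> 0 < t -> [/\ t = h a - g t, 0 < a & t <= a].
Proof.
move=> [t0 ht] t_gt0; have t_eq : t = h a - g t.
  by move: t_gt0; rewrite {1}ht lt_max ltxx orbF => /ltW hp; rewrite {1}ht max_l.
have gt0 : 0 <= g t by rewrite -g0 g_mono ?lexx.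
have [a0|a0] := leP a 0; first by have := h_le0 _ a0; lra.
by split => //; have := h_le _ (ltW a0); lra.
Qed.

Lemma scalar_sol_subr_le {a b t u} : scalar_sol a t -> scalar_sol b u -> t - u <= `|a - b|.
Proof.
move=> st su; have [tu|ut] := leP t u; first by rewrite (le_trans _ (normr_ge0 _)) ?subr_le0.
have [t_eq a0 _] := scalar_sol_gt0 st (le_lt_trans su.1 ut).
have gtu : g u <= g t by rewrite g_mono ?su.1 // ltW.
have hbu : h b - g u <= u by rewrite {2}su.2 le_max lexx.
by have := h_subr_le _ b (ltW a0); lra.
Qed.

Lemma scalar_sol_lipschitz {a b t u} : scalar_sol a t -> scalar_sol b u -> `|t - u| <= `|a - b|.
Proof.
move=> st su; rewrite ler_norml scalar_sol_subr_le // andbT.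
by rewrite lerNl opprB distrC scalar_sol_subr_le.
Qed.

End ScalarEquation.

Arguments scalar_sol {R} h g a t.
Arguments scalar_sol_exists {R} h {g}.
Arguments scalar_sol_gt0 {R h g} _ _ _ _ _ _ {a t}.
Arguments scalar_sol_lipschitz {R h g} _ _ _ _ _ _ {a b t u}.

Section Excess.
Variables (R : realType) (m : nat).
Implicit Types (U W A B : 'I_m -> R).

Definition excess U l := U l - \sum_(p < m | p != l) U p.

Lemma excess_pair_le0 U k l : (forall p, 0 <= U p) -> k != l -> excess U k + excess U l <= 0.
Proof.
move=> U0 kl.
have Ul : U l <= \sum_(p < m | p != k) U p by rewrite (bigD1 l) 1?eq_sym //= lerDl sumr_ge0.
have Uk : U k <= \sum_(p < m | p != l) U p by rewrite (bigD1 k) //= lerDl sumr_ge0.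
rewrite /excess; lra.
Qed.

Lemma excess_single {U i} l : (forall p, p != i -> U p = 0) ->
  excess U l = if l == i then U i else - U i.
Proof.
move=> Ui; rewrite /excess; case: eqP => [->|/eqP li].
  by rewrite big1 ?subr0.
rewrite Ui // (bigD1 i) 1?eq_sym //= big1 ?addr0 ?sub0r // => p /andP[_]; exact: Ui.
Qed.

Lemma excess_lipschitz U W K l : (forall p, `|U p - W p| <= K) ->
  `|excess U l - excess W l| <= m%:R * K.
Proof.
move=> UW; have m_eq : m%:R = (m.-1)%:R + 1 :> R.
  by rewrite natr1 prednK // (leq_ltn_trans _ (ltn_ord l)).
have -> : excess U l - excess W l = (U l - W l) - \sum_(p < m | p != l) (U p - W p).
  by rewrite /excess sumrB; ring.
apply: le_trans (ler_normB _ _) _.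
apply: le_trans (lerD (UW l) (le_trans (ler_norm_sum _ _ _) (ler_sum _ (fun p _ => UW p)))) _.
by rewrite sumr_const cardC1 card_ord m_eq mulrDl mul1r mulr_natl addrC.
Qed.

Lemma support_le1 {U A} (i0 : 'I_m) : (forall p, 0 <= U p) -> (forall p, 0 < U p -> U p <= A p) ->
  (forall p q, p != q -> A p + A q <= 0) -> exists i, forall p, p != i -> U p = 0.
Proof.
move=> U0 UA Apair.
have [[i Ui]|] := pselect (exists i, 0 < U i); last first.
  move=> noU; exists i0 => p _; apply/eqP; rewrite eq_le U0 andbT leNgt.
  by apply/negP => Up; apply: noU; exists p.
exists i => p pi; apply/eqP; rewrite eq_le U0 andbT leNgt; apply/negP => Up.
by have := Apair _ _ pi; have := UA _ Up; have := UA _ Ui; lra.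
Qed.

Lemma excess_dist_le U W A B l : (forall p, 0 <= U p) -> (forall p, 0 <= W p) ->
  (forall p, 0 < U p -> U p <= A p) -> (forall p, 0 < W p -> W p <= B p) ->
  (forall p q, p != q -> A p + A q <= 0) -> (forall p q, p != q -> B p + B q <= 0) ->
  (forall p, `|U p - W p| <= `|A p - B p|) ->
  exists k, `|excess U l - excess W l| <= `|A k - B k|.
Proof.
move=> U0 W0 UA WB Apair Bpair UW.
have [i Ui] := support_le1 l U0 UA Apair; have [j Wj] := support_le1 l W0 WB Bpair.
have common k : (forall p, p != k -> U p = 0) -> (forall p, p != k -> W p = 0) ->
    exists k, `|excess U l - excess W l| <= `|A k - B k|.
  move=> Uk Wk; exists k; rewrite (excess_single l Uk) (excess_single l Wk).
  by case: eqP => _; rewrite ?UW // -opprD normrN UW.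
have [ji|ji] := eqVneq j i; first by subst j; exact: (common i).
have [Ui0|Uipos] := eqVneq (U i) 0.
  by apply: (common j) => // p _; have [->|/Ui] := eqVneq p i.
have [Wj0|Wjpos] := eqVneq (W j) 0.
  by apply: (common i) => // p _; have [->|/Wj] := eqVneq p j.
have Uigt0 : 0 < U i by rewrite lt_def Uipos U0.
have Wjgt0 : 0 < W j by rewrite lt_def Wjpos W0.
exists i; rewrite (excess_single l Ui) (excess_single l Wj).
have := Bpair _ _ ji; have := UA _ Uigt0; have := WB _ Wjgt0.
move: (ler_norm (A i - B i)); case: eqP; case: eqP => _ _ *;
  rewrite ler_norml; apply/andP; split; lra.
Qed.

End Excess.

Arguments excess {R m}.
Arguments excess_pair_le0 {R m}.
Arguments excess_lipschitz {R m}.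
Arguments excess_dist_le {R m}.

Lemma le0_geometric (R : realType) (q K th : R) : 0 <= th < 1 -> 0 <= K ->
  (forall n, q <= K * th ^+ n) -> q <= 0.
Proof.
move=> /andP[th0 th1] K0 hq; rewrite leNgt; apply/negP => q_gt0.
have qK : 0 < q / (K + 1) by rewrite divr_gt0 // ltr_wpDl.
have := @cvg_geometric R 1 th; rewrite ger0_norm // => /(_ th1) /cvgrPdist_lt.
move=> /(_ _ qK) [N _ /(_ N (leqnn N))].
rewrite sub0r normrN /geometric /= mul1r ger0_norm ?exprn_ge0 // ltr_pdivlMr ?ltr_wpDl //.
have := hq N; have : K * th ^+ N <= (K + 1) * th ^+ N by rewrite ler_wpM2r ?exprn_ge0 ?lerDl.
rewrite mulrC; lra.
Qed.

Lemma geometric_limit {R : realType} {a : nat -> R} {C th : R} : 0 <= th < 1 -> 0 <= C ->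
  (forall n, `|a n.+1 - a n| <= C * th ^+ n) ->
  exists L, forall n, `|a n - L| <= C / (1 - th) * th ^+ n.
Proof.
move=> /andP[th0 th1] C0 gap; set c := C / (1 - th).
have c0 : 0 <= c by rewrite divr_ge0 // subr_ge0 ltW.
have C_eq : C = c * (1 - th) by rewrite /c divfK // subr_eq0 gt_eqF.
have tail n k : `|a (n + k)%N - a n| <= c * (th ^+ n - th ^+ (n + k)).
  elim: k => [|k IH]; first by rewrite addn0 !subrr normr0 mulr0.
  apply: le_trans (ler_distD (a (n + k)%N) _ _) _; rewrite addnS.
  by apply: le_trans (lerD (gap _) IH) _; rewrite C_eq exprSr; lra.
have tail_le n j : (n <= j)%N -> `|a j - a n| <= c * th ^+ n.
  move=> /subnKC <-; apply: le_trans (tail n (j - n)%N) _.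
  by rewrite ler_wpM2l // gerBl exprn_ge0.
have thX_ge0 n : 0 <= c * th ^+ n by rewrite mulr_ge0 ?exprn_ge0.
pose S := [set a j - c * th ^+ j | j in [set: nat]].
have S_sup : has_sup S.
  split; first by exists (a 0%N - c * th ^+ 0); exists 0%N.
  exists (a 0%N + c) => _ [j _ <-].
  have := tail_le 0%N j (leq0n j); rewrite expr0 mulr1 ler_norml => /andP[_].
  by have := thX_ge0 j; lra.
exists (sup S) => n; rewrite ler_norml; apply/andP; split; last first.
  have : a n - c * th ^+ n <= sup S by apply: sup_upper_bound => //; exists n.
  lra.
suff : sup S <= a n + c * th ^+ n by lra.
apply: ge_sup; first exact: S_sup.1.
move=> _ [j _ <-]; have [nj|jn] := leqP n j.
  by have := tail_le n j nj; rewrite ler_norml => /andP[_]; have := thX_ge0 j; lra.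
by have := tail_le j n (ltnW jn); rewrite ler_norml => /andP[+ _]; have := thX_ge0 n; lra.
Qed.

Lemma geometric_limit2 {R : realType} {I J : Type} {a : nat -> I -> J -> R} {C th : R} :
  0 <= th < 1 -> 0 <= C -> (forall n i j, `|a n.+1 i j - a n i j| <= C * th ^+ n) ->
  exists L, forall i j n, `|a n i j - L i j| <= C / (1 - th) * th ^+ n.
Proof.
move=> th01 C0 gap.
have /choice [L LP] : forall i, exists Li : J -> R,
    forall j n, `|a n i j - Li j| <= C / (1 - th) * th ^+ n.
  move=> i; have [Li LiP] := choice (fun j => geometric_limit th01 C0 (fun n => gap n i j)).
  by exists Li.
by exists L.
Qed.

Section Growth.
Variables (V : finType) (e : rel V).
Implicit Types (S : {set V}) (x y w : V).

Definition grow S : {set V} := S :|: [set z | [exists w in S, e w z]]%SET.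

Lemma ballE k x : Defs.ball e k x = iter k grow [set x]%SET.
Proof. by []. Qed.

Lemma grow_path k S {w p} : w \in iter k grow S -> path e w p ->
  last w p \in iter (k + size p) grow S.
Proof.
move=> wk; elim/last_ind: p => [|p z IH]; first by rewrite addn0.
rewrite rcons_path last_rcons size_rcons addnS => /andP[/IH pS ez].
by rewrite /= /grow !inE; apply/orP; right; apply/existsP; exists (last w p); rewrite pS.
Qed.

Lemma grow_mono k k' S : (k <= k')%N -> iter k grow S \subset iter k' grow S.
Proof.
move=> /subnK <-; elim: (k' - k)%N => [|d IH]; first by rewrite add0n.
by rewrite addSn /= (fintype.subset_trans IH) // finset.subsetUl.
Qed.

Lemma mem_growP k S y : y \in iter k grow S ->
  exists w p, [/\ w \in S, (size p <= k)%N, path e w p & last w p = y].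
Proof.
elim: k y => [|k IH] y; first by exists y, [::].
rewrite /= /grow !inE => /orP[/IH [w [p [wS sp wp <-]]]|/existsP [z /andP[/IH]]].
  by exists w, p; split; rewrite // ltnW.
move=> [w [p [wS sp wp <-]]] ez; exists w, (rcons p y).
by rewrite size_rcons rcons_path last_rcons wp ez.
Qed.

Lemma ball_succ k x y :
  y \in Defs.ball e k.+1 x -> y = x \/ exists2 z, e x z & y \in Defs.ball e k z.
Proof.
move=> /mem_growP [w [[|z p] [/set1P -> sp /= xp <-]]]; first by left.
case/andP: xp => xz zp; right; exists z => //.
have := grow_path 0 _ (set11 z) zp.
rewrite ballE; apply: (fintype.subsetP (grow_mono _ _ _ _)); rewrite // add0n -ltnS.
Qed.

Hypothesis connected : forall x y, connect e x y.

Lemma ball_card x y : exists2 k, (k < #|V|)%N & y \in Defs.ball e k x.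
Proof.
have /connectP [p xp ->] := connected x y; have [q xq uq _] := shortenP xp.
exists (size q); first by rewrite -[(size q).+1]/(size (x :: q)) -(card_uniqP uq) max_card.
by have := grow_path 0 _ (set11 x) xq.
Qed.

Lemma gdist_le {k x y} : y \in Defs.ball e k x -> (gdist e x y <= k)%N.
Proof.
move=> yk; have [kV|Vk] := ltnP k #|V|; last first.
  by apply: leq_trans Vk; rewrite -[leqRHS](size_iota 0 #|V|) find_size.
rewrite leqNgt; apply/negP => /(before_find 0).
by rewrite nth_iota // add0n yk.
Qed.

Lemma mem_ball_gdist x y : y \in Defs.ball e (gdist e x y) x.
Proof.
have [k kV yk] := ball_card x y.
have d_lt : (gdist e x y < #|V|)%N by rewrite (leq_ltn_trans (gdist_le yk)).
have := d_lt; rewrite -[X in (_ < X)%N](size_iota 0) -has_find => /(nth_find 0).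
by rewrite nth_iota ?add0n.
Qed.

Lemma gdist_eq0 x y : gdist e x y = 0%N -> x = y.
Proof. by move=> d0; have := mem_ball_gdist x y; rewrite d0 => /set1P. Qed.

End Growth.

Arguments grow {V} e S.
Arguments gdist_le {V e k x y}.
Arguments mem_ball_gdist {V e} connected x y.
Arguments gdist_eq0 {V e} connected {x y}.

Section MeanValue.
Variables (R : realType) (V : finType) (e : rel V).
Implicit Types (F G : V -> R).

Lemma mean_valB F G x : mean_val e (fun y => F y - G y) x = mean_val e F x - mean_val e G x.
Proof. by rewrite /mean_val sumrB mulrBr. Qed.

Lemma mean_val_sum (I : finType) (P : pred I) (F : I -> V -> R) x :
  mean_val e (fun y => \sum_(i | P i) F i y) x = \sum_(i | P i) mean_val e (F i) x.
Proof. by rewrite /mean_val exchange_big mulr_sumr. Qed.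

Lemma mean_val_ge0 F x : (forall y, 0 <= F y) -> 0 <= mean_val e F x.
Proof. by move=> F0; rewrite /mean_val mulr_ge0 ?invr_ge0 ?sumr_ge0. Qed.

Lemma sum_nbr_const x (c : R) : \sum_(y in V | e x y) c = (gdeg e x)%:R * c.
Proof.
rewrite (eq_bigl (mem [set y | e x y]%SET)) ?sumr_const ?mulr_natl // => y.
by rewrite !inE.
Qed.

Lemma normr_mean_val_le F (E : R) x : (0 < gdeg e x)%N -> (forall y, `|F y| <= E) ->
  `|mean_val e F x| <= E.
Proof.
move=> deg_gt0 FE; have deg_gt0R : 0 < (gdeg e x)%:R :> R by rewrite ltr0n.
rewrite /mean_val normrM ger0_norm ?invr_ge0 ?ler0n // ler_pdivrMl //.
apply: le_trans (ler_norm_sum _ _ _) _.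
by rewrite -sum_nbr_const ler_sum.
Qed.

End MeanValue.

Section ConnectedGraph.
Variables (R : realType) (V : finType) (e : rel V).
Hypotheses (e_sym : symmetric e) (connected : forall x y, connect e x y)
  (V_gt1 : (1 < #|V|)%N).

Local Notation bnd x := (@in_boundary V e R x).

Lemma exists_boundary : exists x, bnd x.
Proof.
have /card_gt0P [y0 _] : (0 < #|V|)%N by exact: ltnW.
have [x _ x_max] := @arg_maxnP V y0 predT (fun z => gdist e z y0) isT.
have [z zy0] : exists z, z != y0.
  move: V_gt1; rewrite (cardD1 y0) inE add1n ltnS => /card_gt0P [z].
  by rewrite !inE => /andP[zy0 _]; exists z.
have : (0 < gdist e x y0)%N.
  apply: leq_trans (x_max z isT); rewrite lt0n.
  by apply: contra zy0 => /eqP/(gdist_eq0 connected)->.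
case d_eq: (gdist e x y0) => [//|d] _.
have := mem_ball_gdist connected x y0; rewrite d_eq => /ball_succ [y0x|[z0 xz0 y0z0]].
  by move: d_eq; rewrite y0x; have := @gdist_le _ e 0 x x (set11 x); rewrite leqn0 => /eqP->.
exists x, y0; rewrite /mean_val d_eq.
have deg_gt0 : 0 < (gdeg e x)%:R :> R by rewrite ltr0n; apply/card_gt0P; exists z0; rewrite inE.
rewrite ltr_pdivrMl // -sum_nbr_const (bigD1 z0) //= [ltRHS](bigD1 z0) //=.
apply: ltr_leD; first by rewrite ltr_nat ltnS gdist_le.
by apply: ler_sum => y _; rewrite ler_nat -d_eq; exact: x_max.
Qed.

Definition boundary : {set V} := [set x | `[< bnd x >]]%SET.

Lemma grow_boundary_cover x : exists k, x \in iter k (grow e) boundary.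
Proof.
have [b bb] := exists_boundary; have /connectP [p bp ->] := connected b x.
by exists (0 + size p)%N; apply: grow_path bp; rewrite inE; apply/asboolP.
Qed.

Definition depth x : nat := ex_minn (grow_boundary_cover x).

Lemma mem_depth x : x \in iter (depth x) (grow e) boundary.
Proof. by rewrite /depth; case: ex_minnP. Qed.

Lemma depth_le k x : x \in iter k (grow e) boundary -> (depth x <= k)%N.
Proof. by rewrite /depth; case: ex_minnP => n _; apply. Qed.

Lemma depth_eq0 x : (depth x == 0)%N = `[< bnd x >].
Proof.
apply/idP/idP => [/eqP d0|bx]; first by have := mem_depth x; rewrite d0 inE.
by rewrite -leqn0 depth_le // inE.
Qed.

Lemma depth_nbr x y : e x y -> (depth y <= (depth x).+1)%N.
Proof.
move=> xy; apply: depth_le; rewrite /= /grow !inE; apply/orP; right.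
by apply/existsP; exists x; rewrite mem_depth.
Qed.

Lemma depth_pred {x k} : depth x = k.+1 -> exists2 y, e x y & (depth y <= k)%N.
Proof.
move=> dx; have := mem_depth x; rewrite dx /= /grow !inE => /orP[/depth_le|].
  by rewrite dx ltnn.
by move=> /existsP [y /andP[/depth_le yk yx]]; exists y; rewrite // e_sym.
Qed.

Lemma gdeg_gt0 x : ~ bnd x -> (0 < gdeg e x)%N.
Proof.
move=> nbx; case dx: (depth x) (depth_eq0 x) => [|k] bx; first by move/esym/asboolP: bx.
by have [y xy _] := depth_pred dx; apply/card_gt0P; exists y; rewrite inE.
Qed.

Definition decay : R := #|V|%:R^-1.

Lemma decay_gt0 : 0 < decay.
Proof. by rewrite invr_gt0 ltr0n ltnW. Qed.

Lemma decay_lt1 : decay < 1.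
Proof. by rewrite invf_lt1 ?ltr1n // ltr0n ltnW. Qed.

Lemma decayX_le k k' : (k <= k')%N -> decay ^+ k' <= decay ^+ k.
Proof. by move=> kk'; rewrite ler_wiXn2l // ltW ?decay_gt0 ?decay_lt1. Qed.

Lemma gdeg_decay_le x : (gdeg e x)%:R * decay <= 1.
Proof. by rewrite ler_pdivrMr ?mul1r ?ler_nat ?max_card // ltr0n ltnW. Qed.

Definition weight x : R := 1 - decay ^+ depth x.

Lemma weight_ge0 x : 0 <= weight x.
Proof. by rewrite subr_ge0 -(expr0 decay) decayX_le. Qed.

Lemma weight_le1 x : weight x <= 1.
Proof. by rewrite gerBl exprn_ge0 // ltW ?decay_gt0. Qed.

Lemma weight_boundary x : bnd x -> weight x = 0.
Proof.
by move=> /asboolP; rewrite -depth_eq0 /weight => /eqP->; rewrite expr0 subrr.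
Qed.

Lemma weight_gt0 x : ~ bnd x -> 0 < weight x.
Proof.
move=> nbx; rewrite /weight subr_gt0 -[ltRHS](expr0 decay).
case dx: (depth x) (depth_eq0 x) => [|k] bx; first by move/esym/asboolP: bx.
by rewrite ltr_iXn2l // ?decay_gt0 ?decay_lt1.
Qed.

Lemma sum_nbr_weight_lt x : ~ bnd x ->
  \sum_(y in V | e x y) weight y < (gdeg e x)%:R * weight x.
Proof.
move=> nbx; case dx: (depth x) (depth_eq0 x) => [|k] bx; first by move/esym/asboolP: bx.
have [z0 xz0 dz0] := depth_pred dx.
have r_gt0 := decay_gt0; have r_lt1 := decay_lt1; have qr_le1 := gdeg_decay_le x.
set q := (gdeg e x)%:R in qr_le1 *; set r := decay in r_gt0 r_lt1 qr_le1 *.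
set a := r ^+ k; have a_gt0 : 0 < a by rewrite exprn_gt0.
pose c := 1 - a * r ^+ 2.
have wz0 : weight z0 <= 1 - a by rewrite lerB // decayX_le.
have : \sum_(y in V | e x y) (weight y - c) <= weight z0 - c.
  rewrite (bigD1 z0) //= gerDl sumr_le0 // => y /andP[xy _].
  by rewrite subr_le0 lerB // -exprD addn2 decayX_le // -dx depth_nbr.
rewrite sumrB sum_nbr_const -/q => sum_le.
have wx : weight x = 1 - a * r by rewrite /weight dx exprSr.
(* after these bounds the gap is a (1 - r) (1 + r - q r), positive since q r <= 1 *)
have key : 0 < a * (1 - r) * (1 + r - q * r) by rewrite !mulr_gt0 //; lra.
by rewrite wx; rewrite /c in sum_le; lra.
Qed.

Definition mean_ratio x : R := if `[< bnd x >] then 0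
  else (\sum_(y in V | e x y) weight y) / ((gdeg e x)%:R * weight x).

Definition theta : R := \big[Num.max/0]_x mean_ratio x.

Lemma theta_ge0 : 0 <= theta.
Proof. exact: bigmax_ge_id. Qed.

Lemma theta_lt1 : theta < 1.
Proof.
apply: bigmax_lt => // x _; rewrite /mean_ratio; case: asboolP => // nbx.
by rewrite ltr_pdivrMr ?mul1r ?sum_nbr_weight_lt // mulr_gt0 ?ltr0n ?gdeg_gt0 ?weight_gt0.
Qed.

Lemma mean_val_weight_le (F : V -> R) (E : R) x : ~ bnd x -> 0 <= E ->
  (forall y, `|F y| <= E * weight y) -> `|mean_val e F x| <= theta * E * weight x.
Proof.
move=> nbx E0 FE; have deg_gt0 : 0 < (gdeg e x)%:R :> R by rewrite ltr0n gdeg_gt0.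
have ratio_le : \sum_(y in V | e x y) weight y <= theta * ((gdeg e x)%:R * weight x).
  have := le_bigmax 0 mean_ratio x; rewrite -/theta /mean_ratio; case: asboolP => // _.
  by rewrite ler_pdivrMr // mulr_gt0 ?weight_gt0.
rewrite /mean_val normrM ger0_norm ?invr_ge0 ?ler0n // ler_pdivrMl //.
apply: le_trans (ler_norm_sum _ _ _) _; apply: le_trans (ler_sum _ (fun y _ => FE y)) _.
rewrite -mulr_sumr; apply: le_trans (ler_wpM2l E0 ratio_le) _.
lra.
Qed.

Section Solution.
Variables (m : nat) (H : V -> R -> R) (f : 'I_m -> V -> R -> R) (phi : 'I_m -> V -> R).
Hypotheses (f_cont : forall l x, {within [set s : R | 0 <= s], continuous (f l x)})
  (H0 : forall x, H x 0 = 0) (f0 : forall l x, f l x 0 = 0)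
  (H_odd : forall x s, s < 0 -> H x s = - H x (- s))
  (phi_ge0 : forall l x, @in_boundary V e R x -> 0 <= phi l x)
  (H_mono : forall x s t, 0 <= s -> s <= t -> H x s <= H x t)
  (f_mono : forall l x s t, 0 <= s -> s <= t -> f l x s <= f l x t)
  (H_lip : forall x s t, 0 <= s -> 0 <= t -> `|H x s - H x t| <= `|s - t|).

Implicit Types (u v : 'I_m -> V -> R) (S : 'I_m -> V -> R).

Definition is_solution u := forall l : 'I_m,
  (forall x, ~ bnd x ->
     u l x = Num.max (H x (mean_val e (u l) x - \sum_(p < m | p != l) mean_val e (u p) x)
                      - f l x (u l x)) 0) /\
  (forall x, bnd x -> u l x = phi l x).

Definition local_sol l x (a : R) : R :=
  projT1 (cid (scalar_sol_exists (H x) (f0 l x) (f_mono l x) (f_cont l x) a)).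

Lemma local_solP l x a : scalar_sol (H x) (f l x) a (local_sol l x a).
Proof. exact: projT2 (cid _). Qed.

Lemma scalar_sol_dist_le {l x a b t t'} : scalar_sol (H x) (f l x) a t ->
  scalar_sol (H x) (f l x) b t' -> `|t - t'| <= `|a - b|.
Proof.
move=> st st'.
exact: (scalar_sol_lipschitz (H0 x) (H_odd x) (H_mono x) (H_lip x) (f0 l x) (f_mono l x) st st').
Qed.

Lemma local_sol_lipschitz l x a b : `|local_sol l x a - local_sol l x b| <= `|a - b|.
Proof. exact: scalar_sol_dist_le (local_solP l x a) (local_solP l x b). Qed.

Lemma local_sol_uniq l x a t : scalar_sol (H x) (f l x) a t -> t = local_sol l x a.
Proof.
move=> st; apply/eqP; rewrite -subr_eq0 -normr_le0.
by have := scalar_sol_dist_le st (local_solP l x a); rewrite subrr normr0.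
Qed.

Lemma local_sol_le l x a : 0 < local_sol l x a -> local_sol l x a <= a.
Proof.
move=> /(scalar_sol_gt0 (H0 x) (H_odd x) (H_mono x) (H_lip x) (f0 l x) (f_mono l x)
  (local_solP l x a)).
by case.
Qed.

Definition field_excess u l x := excess (fun p => u p x) l.

Lemma mean_field_excess u l x :
  mean_val e (field_excess u l) x = excess (fun p => mean_val e (u p) x) l.
Proof. by rewrite /field_excess /excess mean_valB mean_val_sum. Qed.

(* The iteration runs on excess fields rather than on [u]: the contraction estimate
   [step_contraction] only controls excesses. *)
Definition update S l x : R :=
  if `[< bnd x >] then phi l x else local_sol l x (mean_val e (S l) x).

Definition step u := update (field_excess u).

Lemma update_ge0 S l x : 0 <= update S l x.
Proof. by rewrite /update; case: asboolP => [/phi_ge0|_] //; exact: (local_solP _ _ _).1. Qed.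

Lemma update_lipschitz S S' l x K : (forall y, `|S l y - S' l y| <= K) ->
  `|update S l x - update S' l x| <= K.
Proof.
move=> SK; rewrite /update; case: asboolP => nbx.
  by rewrite subrr normr0 (le_trans _ (SK x)).
apply: le_trans (local_sol_lipschitz _ _ _ _) _.
by rewrite -mean_valB normr_mean_val_le ?gdeg_gt0.
Qed.

Lemma is_solution_step u : is_solution u <-> u = step u.
Proof.
split=> [solu|fixu l]; last first.
  split=> x; last by rewrite fixu /step /update; case: asboolP.
  move=> nbx; have ux : u l x = local_sol l x (mean_val e (field_excess u l) x).
    by rewrite {1}fixu /step /update; case: asboolP.
  by rewrite {1}ux {1}(local_solP l x _).2 -ux mean_field_excess.
apply/funext => l; apply/funext => x; rewrite /step /update.
case: asboolP => [/(solu l).2 //|nbx]; apply: local_sol_uniq.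
have [u_int _] := solu l; split; last by rewrite mean_field_excess {1}u_int.
by rewrite u_int // le_max lexx orbT.
Qed.

Definition excess_close (E : R) u v :=
  forall l x, `|field_excess u l x - field_excess v l x| <= E * weight x.

Lemma excess_close_exists u v : (forall l x, bnd x -> u l x = v l x) ->
  exists2 E, 0 <= E & excess_close E u v.
Proof.
move=> uv; pose D l x := `|field_excess u l x - field_excess v l x|.
have D0 l x : 0 <= D l x / weight x by rewrite /D divr_ge0 ?normr_ge0 ?weight_ge0.
exists (\sum_y \sum_p D p y / weight y); first by apply: sumr_ge0 => y _; apply: sumr_ge0.
move=> l x; case: (asboolP (bnd x)) => [bx|nbx].
  rewrite weight_boundary // mulr0 /field_excess.
  suff -> : (fun p => u p x) = (fun p => v p x) by rewrite subrr normr0.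
  by apply/funext => p; exact: uv.
rewrite -ler_pdivrMr ?weight_gt0 //; apply: le_trans (_ : _ <= \sum_p D p x / weight x) _.
  by rewrite (bigD1 l) //= lerDl sumr_ge0.
by rewrite [leRHS](bigD1 x) //= lerDl; apply: sumr_ge0 => y _; apply: sumr_ge0.
Qed.

Lemma step_contraction u v E : (forall l x, 0 <= u l x) -> (forall l x, 0 <= v l x) ->
  0 <= E -> excess_close E u v -> excess_close (theta * E) (step u) (step v).
Proof.
move=> u0 v0 E0 uv l x; case: (asboolP (bnd x)) => [bx|nbx].
  rewrite weight_boundary // mulr0 /field_excess.
  suff -> : (fun p => step u p x) = (fun p => step v p x) by rewrite subrr normr0.
  by apply/funext => p; rewrite /step /update; case: asboolP.
pose A w p := mean_val e (field_excess w p) x.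
have step_int w p : step w p x = local_sol p x (A w p) by rewrite /step /update; case: asboolP.
have step_le w p : 0 < step w p x -> step w p x <= A w p by rewrite step_int; exact: local_sol_le.
have step_lip p : `|step u p x - step v p x| <= `|A u p - A v p|.
  by rewrite !step_int local_sol_lipschitz.
have A_pair w : (forall l x, 0 <= w l x) -> forall p q, p != q -> A w p + A w q <= 0.
  move=> w0 p q pq; rewrite /A !mean_field_excess excess_pair_le0 // => k.
  exact: mean_val_ge0.
have [k le_k] := excess_dist_le _ _ _ _ l (fun p => update_ge0 _ p x)
  (fun p => update_ge0 _ p x) (step_le u) (step_le v) (A_pair u u0) (A_pair v v0) step_lip.
by apply: le_trans le_k _; rewrite /A -mean_valB mean_val_weight_le.
Qed.

Lemma iter_step_ge0 n u l x : (forall l x, 0 <= u l x) -> 0 <= iter n step u l x.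
Proof. by case: n => [|n] u0; [exact: u0 | exact: update_ge0]. Qed.

Lemma iter_step_close n {u v E} : (forall l x, 0 <= u l x) -> (forall l x, 0 <= v l x) ->
  0 <= E -> excess_close E u v -> excess_close (theta ^+ n * E) (iter n step u) (iter n step v).
Proof.
move=> u0 v0 E0 uv; elim: n => [|n IH]; first by rewrite expr0 mul1r.
rewrite exprS -mulrA; apply: step_contraction => // [l x|l x|]; try exact: iter_step_ge0.
by rewrite mulr_ge0 ?exprn_ge0 ?theta_ge0.
Qed.

Lemma solution_unique u v : is_solution u -> is_solution v -> u = v.
Proof.
move=> /is_solution_step fu /is_solution_step fv.
have u0 l x : 0 <= u l x by rewrite fu update_ge0.
have v0 l x : 0 <= v l x by rewrite fv update_ge0.
have [E E0 uv] : exists2 E, 0 <= E & excess_close E u v.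
  by apply: excess_close_exists => l x bx; rewrite fu fv /step /update; case: asboolP.
have iter_fix w n : w = step w -> iter n step w = w by move=> fw; elim: n => //= n ->.
have same l x : field_excess u l x = field_excess v l x.
  apply/eqP; rewrite -subr_eq0 -normr_le0.
  apply: (@le0_geometric _ _ (E * weight x) theta) => [||n].
  - by rewrite theta_ge0 theta_lt1.
  - by rewrite mulr_ge0 ?weight_ge0.
  - by have := iter_step_close n u0 v0 E0 uv l x; rewrite !iter_fix //; lra.
rewrite fu fv /step; congr update; apply/funext => l; apply/funext => x; exact: same.
Qed.

Lemma excess_limit_fixpoint {us : nat -> 'I_m -> V -> R} {S c} : 0 <= c ->
  (forall n, us n.+1 = step (us n)) ->
  (forall l x n, `|field_excess (us n) l x - S l x| <= c * theta ^+ n) ->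
  forall l x, field_excess (update S) l x = S l x.
Proof.
move=> c0 us_step SP l x; apply/eqP; rewrite -subr_eq0 -normr_le0.
have update_close n p : `|update S p x - us n.+1 p x| <= c * theta ^+ n.
  by rewrite us_step; apply: update_lipschitz => y; rewrite distrC.
apply: (@le0_geometric _ _ (m%:R * c + c) theta) => [||n].
- by rewrite theta_ge0 theta_lt1.
- by rewrite addr_ge0 // mulr_ge0 // ler0n.
apply: le_trans (ler_distD (field_excess (us n.+1) l x) _ _) _.
have := excess_lipschitz _ _ _ l (fun p => update_close n p).
have : c * theta ^+ n.+1 <= c * theta ^+ n.
  by apply: ler_wpM2l => //; rewrite exprS ler_piMl ?exprn_ge0 ?theta_ge0 // ltW ?theta_lt1.
by have := SP l x n.+1; rewrite /field_excess; lra.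
Qed.

Lemma solution_exists : exists u, is_solution u.
Proof.
pose us n := iter n step (step (fun _ _ => 0)).
have us0 n l x : 0 <= us n l x by apply: iter_step_ge0 => *; exact: update_ge0.
have [E E0 close01] : exists2 E, 0 <= E & excess_close E (us 1%N) (us 0%N).
  by apply: excess_close_exists => l x bx; rewrite /us /= /step /update; case: asboolP.
have gap n l x : `|field_excess (us n.+1) l x - field_excess (us n) l x| <= E * theta ^+ n.
  have := iter_step_close n (us0 1%N) (us0 0%N) E0 close01 l x.
  rewrite -iterSr => /le_trans; apply; rewrite (mulrC E) ler_piMr ?weight_le1 //.
  by rewrite mulr_ge0 ?exprn_ge0 ?theta_ge0.
have theta01 : 0 <= theta < 1 by rewrite theta_ge0 theta_lt1.
have [S SP] := geometric_limit2 theta01 E0 gap.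
have c0 : 0 <= E / (1 - theta) by rewrite divr_ge0 // subr_ge0 ltW ?theta_lt1.
have fix_S := excess_limit_fixpoint c0 (fun n => erefl) SP.
exists (update S); apply/is_solution_step; rewrite /step; congr update.
by apply/funext => l; apply/funext => x; rewrite fix_S.
Qed.

Lemma solution_exists_unique : exists! u, is_solution u.
Proof.
have [u su] := solution_exists; exists u; split => // v sv; exact: solution_unique.
Qed.

End Solution.

End ConnectedGraph.

Theorem theorem1 (R : realType) (V : finType) (e : rel V) (m : nat)
  (H : V -> R -> R) (f : 'I_m -> V -> R -> R) (phi : 'I_m -> V -> R) :
  symmetric e -> irreflexive e -> (forall x y, connect e x y) -> (1 < #|V|)%N ->
  (1 <= m)%N ->
  (forall x, {within [set s : R | 0 <= s], continuous (H x)}) ->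
  (forall l x, {within [set s : R | 0 <= s], continuous (f l x)}) ->
  (forall x, H x 0 = 0) -> (forall l x, f l x 0 = 0) ->
  (forall x s, s < 0 -> H x s = - H x (- s)) ->
  (forall l x s, s < 0 -> f l x s = - f l x (- s)) ->
  (forall l x, @in_boundary V e R x -> 0 <= phi l x) ->
  (forall i j x, i != j -> @in_boundary V e R x -> phi i x * phi j x = 0) ->
  (forall x s t, 0 <= s -> s <= t -> H x s <= H x t) ->
  (forall l x s t, 0 <= s -> s <= t -> f l x s <= f l x t) ->
  (forall x s t, 0 <= s -> 0 <= t -> `|H x s - H x t| <= `|s - t|) ->
  exists! u : 'I_m -> V -> R,
    forall l : 'I_m,
      (forall x, ~ @in_boundary V e R x ->
         u l x = Num.max (H x (mean_val e (u l) x
                              - \sum_(p < m | p != l) mean_val e (u p) x)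
                          - f l x (u l x)) 0) /\
      (forall x, @in_boundary V e R x -> u l x = phi l x).
Proof.
move=> e_sym _ connected V_gt1 _ _ f_cont H0 f0 H_odd _ phi_ge0 _ H_mono f_mono H_lip.
exact: solution_exists_unique.
Qed.
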